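(* Let $\mathbb{I}\subseteq\mathbb{Z}$ be a discrete interval and $A$ a band operator on $\ell^2(\mathbb{I})$ with band-width $w$. Then for every $N\in\mathbb{N}$, \[ \nu_N(A)=\inf\{\nu_{j..j+N-1}(A):j..j+N-1\subseteq\mathbb{I}\}=\inf\{\nu(C):C\in\mathcal{C}_N(A)\}. \]
   Context: $a..b:=\{n\in\mathbb{Z}:a\le n\le b\}$; a discrete interval is a set of consecutive integers (finite or infinite). A band operator with band-width $w$ has matrix entries $A_{ij}=0$ for $|i-j|>w$. $\nu(T):=\inf\{\|Tx\|:\|x\|=1\}$ (for a matrix $C$, as an operator between finite-dimensional $\ell^2$ spaces); $\nu_N(A):=\inf\{\|Ax\|:\|x\|=1,\operatorname{diam}(\operatorname{supp}x)<N\}$; $\nu_{J}(A):=\inf\{\|Ax\|:\operatorname{supp}x\subseteq J,\|x\|=1\}$. $\mathcal{C}_N(A)$ is the set of $(N+2w)\times N$ matrices $C=(C_{ij})_{i\in1-w..N+w,\,j\in1..N}$ with $C_{ij}=A_{k+i,k+j}$ for some $k$ with $k+1..k+N\subseteq\mathbb{I}$, where $C_{ij}:=0$ if $A_{k+i,k+j}$ is undefined. *)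

From HB Require Import structures.
From mathcomp Require Import all_boot all_order all_algebra.
From mathcomp Require Import complex.
From mathcomp Require Import boolp classical_sets reals.
Set Implicit Arguments. Unset Strict Implicit. Unset Printing Implicit Defensive.
Import Order.TTheory GRing.Theory Num.Theory.
Local Open Scope ring_scope.
Local Open Scope classical_set_scope.

Section Defs.
Variable R : realType.

Definition cabs2 (z : R[i]) : R := complex.Re z ^+ 2 + complex.Im z ^+ 2.

Definition dint (a b : int) : set int := [set n | a <= n <= b].

Definition is_dinterval (I : set int) : Prop :=
  forall a b c : int, I a -> I c -> a <= b <= c -> I b.

Definition is_band (I : set int) (A : int -> int -> R[i]) (w : nat) : Prop :=
  forall i j, I i -> I j -> (w%:Z < `|i - j|) -> A i j = 0.

(* the matrix entries are bounded, so the band matrix defines a bounded operator *)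
Definition bounded_entries (I : set int) (A : int -> int -> R[i]) : Prop :=
  exists M : R, forall i j, I i -> I j -> cabs2 (A i j) <= M.

Definition l2sq (x : int -> R[i]) : R :=
  sup [set (\sum_(k < (2 * n).+1) cabs2 (x (k%:Z - n%:Z))) | n in [set: nat]].

Definition l2norm (x : int -> R[i]) : R := Num.sqrt (l2sq x).

(* restriction of a sequence to I (the output of an operator on l^2(I)) *)
Definition restr (I : set int) (y : int -> R[i]) : int -> R[i] :=
  fun i => if `[< I i >] then y i else 0.

(* action of the band matrix A (band-width w) on a sequence:
   (A x)_i = sum_j A_ij x_j, where only |i - j| <= w contributes *)
Definition bapply (A : int -> int -> R[i]) (w : nat) (x : int -> R[i]) : int -> R[i] :=
  fun i => \sum_(k < (2 * w).+1) A i (i - w%:Z + k%:Z) * x (i - w%:Z + k%:Z).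

Definition supp_in (x : int -> R[i]) (S : set int) : Prop :=
  forall k, x k != 0 -> S k.

Definition diam_lt (x : int -> R[i]) (N : nat) : Prop :=
  forall k l, x k != 0 -> x l != 0 -> (`|k - l| < N%:Z).

Definition nuN (I : set int) (A : int -> int -> R[i]) (w N : nat) : R :=
  inf [set l2norm (restr I (bapply A w x)) | x in
        [set x | supp_in x I /\ l2norm x = 1 /\ diam_lt x N]].

Definition nuJ (I : set int) (A : int -> int -> R[i]) (w : nat) (J : set int) : R :=
  inf [set l2norm (restr I (bapply A w x)) | x in
        [set x | supp_in x J /\ l2norm x = 1]].

Definition vnorm (m : nat) (v : 'cV[R[i]]_m) : R :=
  Num.sqrt (\sum_(r < m) cabs2 (v r ord0)).

Definition numx (m n : nat) (C : 'M[R[i]]_(m, n)) : R :=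
  inf [set vnorm (C *m x) | x in [set x : 'cV[R[i]]_n | vnorm x = 1]].

(* the (N+2w) x N section of A at offset k: row r <-> i = r + 1 - w
   (i in 1-w..N+w), column c <-> j = c + 1 (j in 1..N);
   entries A_{k+i,k+j}, and 0 where undefined (k+i or k+j outside I) *)
Definition section (I : set int) (A : int -> int -> R[i]) (w N : nat) (k : int)
  : 'M[R[i]]_(N + 2 * w, N) :=
  \matrix_(r < N + 2 * w, c < N)
    (if `[< I (k + r%:Z + 1 - w%:Z) /\ I (k + c%:Z + 1) >]
     then A (k + r%:Z + 1 - w%:Z) (k + c%:Z + 1) else 0).

Definition CN (I : set int) (A : int -> int -> R[i]) (w N : nat)
  : set 'M[R[i]]_(N + 2 * w, N) :=
  [set C | exists k : int, dint (k + 1) (k + N%:Z) `<=` I /\ C = section I A w N k].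

End Defs.

Arguments section {R} I A w N k.
Arguments CN {R} I A w N.

(* A vector whose support has diameter less than N and lies in the discrete
   interval I is supported in a window j..j+N-1 that itself lies in I (slide a
   window of I towards the support), so the infimum defining nu_N(A) is the
   infimum over such windows of nu_{j..j+N-1}(A).  For x supported in
   j..j+N-1, A x is supported in j-w..j+N-1+w, where its entries are those of
   the section of A at offset j-1 applied to (x_j, ..., x_{j+N-1}); this
   identifies nu_{j..j+N-1}(A) with nu of that section, a member of C_N(A). *)

From HB Require Import structures.
From mathcomp Require Import all_boot all_order all_algebra.
From mathcomp Require Import complex.
From mathcomp Require Import boolp classical_sets reals.
From mathcomp Require Import zify.
Set Implicit Arguments.
Unset Strict Implicit.
Import Order.TTheory GRing.Theory Num.Theory.
Local Open Scope ring_scope.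
Local Open Scope classical_set_scope.

Section WindowSums.
Variable V : zmodType.
Implicit Types (g : int -> V) (a b : int) (m p : nat).

Definition vanishes_off g a m := forall k, ~~ (a <= k < a + m%:Z) -> g k = 0.

Lemma sum_window_widen g a b m p :
  b <= a -> a + m%:Z <= b + p%:Z -> vanishes_off g a m ->
  \sum_(r < p) g (b + r%:Z) = \sum_(r < m) g (a + r%:Z).
Proof.
move=> hba hmp hg; set d := `|a - b|%N.
have hd : a = b + d%:Z by rewrite /d; lia.
rewrite -(big_mkord xpredT (fun r => g (b + r%:Z))).
rewrite (big_cat_nat _ (n := d)) ?leq_addr //=; last by rewrite /d; lia.
rewrite [X in _ + X](big_cat_nat _ (n := d + m)) ?leq_addr //=; last by rewrite /d; lia.
rewrite big1_seq ?add0r; last first.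
  move=> i /andP[_]; rewrite mem_index_iota => /andP[_ hi].
  by apply: hg; apply/negP => /andP[]; lia.
rewrite [X in _ + X]big1_seq ?addr0; last first.
  move=> i /andP[_]; rewrite mem_index_iota => /andP[hi _].
  by apply: hg; apply/negP => /andP[]; lia.
rewrite -{1}(add0n d) big_addn addKn big_mkord.
by apply: eq_bigr => i _; congr g; lia.
Qed.

Lemma sum_window_eq g a b m p :
  vanishes_off g a m -> vanishes_off g b p ->
  \sum_(r < m) g (a + r%:Z) = \sum_(r < p) g (b + r%:Z).
Proof.
move=> ha hb; pose c := a - (`|a - b|%N)%:Z.
pose q := (`|(a + m%:Z - c)%R|%N + `|(b + p%:Z - c)%R|%N)%N.
by rewrite -(@sum_window_widen g a c m q) ?(@sum_window_widen g b c p q) // /c /q; lia.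
Qed.

End WindowSums.

Lemma int_ubound_has_maximum (B : set int) i : B !=set0 -> ubound B i ->
  exists j, B j /\ forall k, B k -> k <= j.
Proof.
move=> [k0 Bk0] ubBi.
have neB : [set k | B (- k)] !=set0 by exists (- k0); rewrite /= opprK.
have lbB : lbound [set k | B (- k)] (- i) by move=> k /ubBi; rewrite lerNl.
have [j [Bj minj]] := int_lbound_has_minimum neB lbB.
by exists (- j); split => // k Bk; rewrite lerNr minj //= opprK.
Qed.

Local Notation window j N := (dint j (j + N%:Z - 1)).

Section WindowedSequences.
Variable R : realType.
Implicit Types (x y : int -> R[i]) (a j : int) (m N : nat).

Lemma cabs2_ge0 (z : R[i]) : 0 <= cabs2 z.
Proof. by rewrite /cabs2 addr_ge0 ?sqr_ge0. Qed.

Lemma cabs20 : cabs2 (0 : R[i]) = 0.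
Proof. by rewrite /cabs2 /= expr0n /= addr0. Qed.

Lemma supp_in_eq0 x (S : set int) k : supp_in x S -> ~ S k -> x k = 0.
Proof. by move=> hx hk; case: (eqVneq (x k) 0) => // /hx. Qed.

Lemma supp_in_window_vanishes x a m : supp_in x (window a m) -> vanishes_off x a m.
Proof. by move=> hx k hk; apply: supp_in_eq0 hx _; rewrite /dint /= => /andP[]; lia. Qed.

Lemma l2sq_window y a m :
  vanishes_off y a m -> l2sq y = \sum_(r < m) cabs2 (y (a + r%:Z)).
Proof.
move=> hy; set T := \sum_(r < m) _.
have hg : vanishes_off (fun k => cabs2 (y k)) a m by move=> k /hy ->; exact: cabs20.
have partial_le n : \sum_(k < (2 * n).+1) cabs2 (y (k%:Z - n%:Z)) <= T.
  pose g k := if - n%:Z <= k <= n%:Z then cabs2 (y k) else 0.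
  have -> : \sum_(k < (2 * n).+1) cabs2 (y (k%:Z - n%:Z)) =
            \sum_(k < (2 * n).+1) g (- n%:Z + k%:Z).
    apply: eq_bigr => k _; rewrite /g ifT; first by congr (cabs2 (y _)); lia.
    by have := ltn_ord k; lia.
  rewrite (@sum_window_eq _ g _ a _ m).
  - by apply: ler_sum => r _; rewrite /g; case: ifP => _ //; exact: cabs2_ge0.
  - by move=> k hk; rewrite /g ifF //; apply/negbTE; apply: contra hk => /andP[]; lia.
  - by move=> k hk; rewrite /g hg ?if_same.
pose n0 := (absz a + m)%N.
have partial_n0 : \sum_(k < (2 * n0).+1) cabs2 (y (k%:Z - n0%:Z)) = T.
  rewrite /T (@sum_window_eq _ (fun k => cabs2 (y k)) a (- n0%:Z) m (2 * n0).+1) //.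
    by apply: eq_bigr => k _; congr (cabs2 (y _)); lia.
  by move=> k hk; apply: hg; apply: contra hk => /andP[]; rewrite /n0; lia.
rewrite /l2sq; apply/le_anti/andP; split.
- by apply: ge_sup; [exists T, n0 | move=> _ [n _ <-]].
- by apply: ub_le_sup; [exists T => _ [n _ <-] | exists n0].
Qed.

Lemma l2norm_window x j N :
  supp_in x (window j N) -> l2norm x = vnorm (\col_(c < N) x (j + c%:Z)).
Proof.
move=> /supp_in_window_vanishes hx; rewrite /l2norm /vnorm (l2sq_window hx).
by congr Num.sqrt; apply: eq_bigr => c _; rewrite mxE.
Qed.

Lemma l2norm_neq0_support x : l2norm x != 0 -> exists k, x k != 0.
Proof.
apply: contraNP => /forallNP x0.
have hx : vanishes_off x 0 0 by move=> k _; case: (eqVneq (x k) 0) => // /x0.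
by rewrite /l2norm (l2sq_window hx) big_ord0 sqrtr0.
Qed.

Lemma supp_in_window_diam_lt x j N : supp_in x (window j N) -> diam_lt x N.
Proof. by move=> hx k l /hx /andP[? ?] /hx /andP[? ?]; lia. Qed.

Lemma diam_lt_support_bounds x N k0 : x k0 != 0 -> diam_lt x N ->
  exists m M : int, [/\ x m != 0, x M != 0 & forall k, x k != 0 -> m <= k <= M].
Proof.
move=> xk0 hd; pose B := [set k | x k != 0].
have neB : B !=set0 by exists k0.
have lbB : lbound B (k0 - N%:Z) by move=> k /hd /(_ xk0); lia.
have ubB : ubound B (k0 + N%:Z) by move=> k /hd /(_ xk0); lia.
have [m [Bm minm]] := int_lbound_has_minimum neB lbB.
have [M [BM maxM]] := int_ubound_has_maximum neB ubB.
by exists m, M; split => // k Bk; rewrite minm ?maxM.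
Qed.

Lemma exists_unit_window j N : (0 < N)%N -> exists x, supp_in x (window j N) /\ l2norm x = 1.
Proof.
move=> N0; pose x l : R[i] := (l == j)%:R; exists x; split.
  by move=> l; rewrite /x; case: (eqVneq _ j) => [-> _|_]; [rewrite /dint /=; lia | rewrite eqxx].
have hx : vanishes_off x j 1 by move=> k hk; rewrite /x; case: (eqVneq _ j) => // ek; move: hk; lia.
by rewrite /l2norm (l2sq_window hx) big_ord1 addr0 /x eqxx /cabs2 /= expr0n /= addr0 expr1n sqrtr1.
Qed.

Definition seq_of_col N (v : 'cV[R[i]]_N) j : int -> R[i] :=
  fun l => if j <= l then oapp (fun c : 'I_N => v c ord0) 0 (insub `|l - j|%N) else 0.

Lemma seq_of_colE N (v : 'cV[R[i]]_N) j (c : 'I_N) : seq_of_col v j (j + c%:Z) = v c ord0.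
Proof.
rewrite /seq_of_col ifT; last by lia.
by rewrite (_ : `|(j + c%:Z - j)%R|%N = c) ?valK //; lia.
Qed.

Lemma supp_seq_of_col N (v : 'cV[R[i]]_N) j : supp_in (seq_of_col v j) (window j N).
Proof.
move=> l; rewrite /seq_of_col; case: ifP => [jl|]; last by rewrite eqxx.
case: insubP => [c _ hc _|] /=; last by rewrite eqxx.
by rewrite /dint /=; have := ltn_ord c; rewrite hc; lia.
Qed.

Lemma col_seq_of_col N (v : 'cV[R[i]]_N) j : \col_(c < N) seq_of_col v j (j + c%:Z) = v.
Proof. by apply/matrixP => c d; rewrite mxE seq_of_colE (ord1 d). Qed.

End WindowedSequences.

Lemma inf_bigcup (R : realType) (T : Type) (P : set T) (S : T -> set R) :
  P !=set0 -> (forall j, P j -> S j !=set0) -> has_lbound (\bigcup_(j in P) S j) ->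
  inf (\bigcup_(j in P) S j) = inf [set inf (S j) | j in P].
Proof.
move=> [j0 Pj0] neS [l lbU].
have lbS j : P j -> lbound (S j) l by move=> Pj s Ss; apply: lbU; exists j.
have infS_ge j : P j -> l <= inf (S j) by move=> Pj; exact: lb_le_inf (neS _ Pj) (lbS _ Pj).
apply/le_anti/andP; split.
- apply: lb_le_inf; first by exists (inf (S j0)), j0.
  move=> _ [j Pj <-]; apply: lb_le_inf (neS _ Pj) _ => s Ss.
  by apply: ge_inf; [exists l | exists j].
- have [s0 Ss0] := neS _ Pj0.
  apply: lb_le_inf; first by exists s0, j0.
  move=> s [j Pj Ss]; apply: le_trans (ge_inf _ _) (ge_inf _ Ss).
  + by exists l => _ [j' Pj' <-]; exact: infS_ge.
  + by exists j.
  + by exists l; exact: lbS.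
Qed.

Lemma dinterval_window_cover (I : set int) (N : nat) (j0 m M : int) :
  is_dinterval I -> window j0 N `<=` I -> I m -> I M -> m <= M -> M - m < N%:Z ->
  exists j, window j N `<=` I /\ j <= m /\ M <= j + N%:Z - 1.
Proof.
move=> hI hj0 Im IM mM MmN.
have Ij0 : I j0 by apply: hj0; rewrite /dint /=; lia.
have Ij1 : I (j0 + N%:Z - 1) by apply: hj0; rewrite /dint /=; lia.
have [mj0|j0m] := ltP m j0.
  exists m; split; last by lia.
  by move=> t /andP[? ?]; apply: (hI m t (j0 + N%:Z - 1)) => //; lia.
have [j1M|Mj1] := ltP (j0 + N%:Z - 1) M.
  exists (M - N%:Z + 1); split; last by lia.
  by move=> t /andP[? ?]; apply: (hI j0 t M) => //; lia.
by exists j0.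
Qed.

Section BandOperator.
Variables (R : realType) (I : set int) (A : int -> int -> R[i]) (w : nat).
Implicit Types (x : int -> R[i]) (j : int) (N : nat).

Lemma bapply_window_vanishes N j x :
  supp_in x (window j N) -> vanishes_off (restr I (bapply A w x)) (j - w%:Z) (N + 2 * w).
Proof.
move=> hx k hk; rewrite /restr; case: asboolP => // _.
rewrite /bapply big1 // => t _; rewrite (supp_in_eq0 hx) ?mulr0 //.
by rewrite /dint /= => /andP[]; have := ltn_ord t; move: hk; lia.
Qed.

Hypothesis band : is_band I A w.

Lemma bapply_window_section N j x (r : 'I_(N + 2 * w)) :
  window j N `<=` I -> supp_in x (window j N) ->
  restr I (bapply A w x) (j - w%:Z + r%:Z) =
  (section I A w N (j - 1) *m \col_(c < N) x (j + c%:Z)) r ord0.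
Proof.
move=> hJ hx; rewrite mxE /restr.
have sectionE (c : 'I_N) : section I A w N (j - 1) r c =
    if `[< I (j - w%:Z + r%:Z) /\ I (j + c%:Z) >] then A (j - w%:Z + r%:Z) (j + c%:Z) else 0.
  rewrite mxE (_ : j - 1 + r%:Z + 1 - w%:Z = j - w%:Z + r%:Z); last by lia.
  by rewrite (_ : j - 1 + c%:Z + 1 = j + c%:Z); last by lia.
under eq_bigr => c _ do rewrite sectionE mxE.
set i0 := j - w%:Z + r%:Z.
case: asboolP => Ii0; last by rewrite big1 // => c _; rewrite asboolF ?mul0r // => -[].
have Iwin (c : 'I_N) : `[< I i0 /\ I (j + c%:Z) >].
  by apply: asboolT; split => //; apply: hJ; rewrite /dint /=; have := ltn_ord c; lia.
under eq_bigr => c _ do rewrite Iwin.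
(* Both sides sum A i0 l * x l over all l: off the band A i0 l vanishes, off the window x l does. *)
apply: (@sum_window_eq _ (fun l => A i0 l * x l) (i0 - w%:Z) j (2 * w).+1 N).
- move=> l hl; case: (eqVneq (x l) 0) => [->|/hx Jl]; first by rewrite mulr0.
  by rewrite band ?mul0r //; [exact: hJ | move: Jl hl => /andP[]; lia].
- by move=> l /(supp_in_window_vanishes hx) ->; rewrite mulr0.
Qed.

Lemma l2norm_bapply_window N j x :
  window j N `<=` I -> supp_in x (window j N) ->
  l2norm (restr I (bapply A w x)) = vnorm (section I A w N (j - 1) *m \col_(c < N) x (j + c%:Z)).
Proof.
move=> hJ hx; rewrite /l2norm /vnorm (l2sq_window (bapply_window_vanishes hx)).
by congr Num.sqrt; apply: eq_bigr => r _; rewrite bapply_window_section.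
Qed.

Lemma nuJ_window_section N j :
  window j N `<=` I -> nuJ I A w (window j N) = numx (section I A w N (j - 1)).
Proof.
move=> hJ; rewrite /nuJ /numx; congr inf; apply/seteqP; split => _ [x hx <-].
- case: hx => hxJ hx1; exists (\col_(c < N) x (j + c%:Z)).
    by rewrite /= -hx1 (l2norm_window hxJ).
  by rewrite (l2norm_bapply_window hJ hxJ).
- have hsJ : supp_in (seq_of_col x j) (window j N) by exact: supp_seq_of_col.
  exists (seq_of_col x j).
    by split => //; rewrite (l2norm_window hsJ) col_seq_of_col.
  by rewrite (l2norm_bapply_window hJ hsJ) col_seq_of_col.
Qed.

End BandOperator.

Lemma nuN_eq_inf_nuJ (R : realType) (I : set int) (A : int -> int -> R[i]) (w N : nat) :
  is_dinterval I -> (0 < N)%N -> (exists j, window j N `<=` I) ->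
  nuN I A w N = inf [set nuJ I A w (window j N) | j in [set j | window j N `<=` I]].
Proof.
move=> hI N0 [j0 hj0].
pose S j := [set l2norm (restr I (bapply A w x)) | x in
  [set x | supp_in x (window j N) /\ l2norm x = 1]].
have neS j : window j N `<=` I -> S j !=set0.
  by move=> _; have [x hx] := exists_unit_window R j N0; exists (l2norm (restr I (bapply A w x))), x.
have lbS : has_lbound (\bigcup_(j in [set j | window j N `<=` I]) S j).
  by exists 0 => _ [j _ [x _ <-]]; exact: sqrtr_ge0.
rewrite /nuJ -/S -inf_bigcup //; last by exists j0.
congr inf; apply/seteqP; split => [_ [x [xI [x1 xd]] <-] | _ [j hj [x [xJ x1] <-]]].
- have [k0 xk0] : exists k, x k != 0 by apply: l2norm_neq0_support; rewrite x1 oner_neq0.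
  have [m [M [xm xM mM]]] := diam_lt_support_bounds xk0 xd.
  have [j [hj jmM]] : exists j, window j N `<=` I /\ j <= m /\ M <= j + N%:Z - 1.
    apply: dinterval_window_cover hI hj0 (xI _ xm) (xI _ xM) _ _.
    + by have /andP[? ?] := mM _ xm.
    + by have := xd _ _ xM xm; lia.
  exists j => //; exists x => //; split => // k /mM /andP[? ?]; rewrite /dint /=; lia.
- exists x => //; split; first by move=> k /xJ /hj.
  by split => //; exact: supp_in_window_diam_lt xJ.
Qed.

Lemma inf_nuJ_eq_inf_numx (R : realType) (I : set int) (A : int -> int -> R[i]) (w N : nat) :
  is_band I A w ->
  inf [set nuJ I A w (window j N) | j in [set j | window j N `<=` I]] =
  inf [set numx C | C in CN I A w N].
Proof.
move=> band; congr inf; apply/seteqP; split => [_ [j hj <-] | _ [_ [k [hk ->]] <-]].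
- exists (section I A w N (j - 1)); last by rewrite nuJ_window_section.
  by exists (j - 1); split => // t /andP[? ?]; apply: hj; rewrite /dint /=; lia.
- have hk1 : window (k + 1) N `<=` I.
    by move=> t /andP[? ?]; apply: hk; rewrite /dint /=; lia.
  exists (k + 1); first exact: hk1.
  have -> : section I A w N k = section I A w N (k + 1 - 1) by rewrite addrK.
  exact: nuJ_window_section.
Qed.

Unset Implicit Arguments.

Theorem lemma4p1 (R : realType) (I : set int) (A : int -> int -> R[i]) (w N : nat) :
  is_dinterval I -> is_band I A w -> bounded_entries I A ->
  (0 < N)%N ->
  (exists j : int, dint j (j + N%:Z - 1) `<=` I) ->
  nuN I A w N =
    inf [set nuJ I A w (dint j (j + N%:Z - 1)) | j in
          [set j : int | dint j (j + N%:Z - 1) `<=` I]]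
  /\
  inf [set nuJ I A w (dint j (j + N%:Z - 1)) | j in
          [set j : int | dint j (j + N%:Z - 1) `<=` I]] =
    inf [set numx C | C in CN I A w N].
Proof.
(* Bounded entries make A a bounded operator on l^2(I); the identities hold without it. *)
move=> hI band _ N0 hwin.
by split; [exact: nuN_eq_inf_nuJ | exact: inf_nuJ_eq_inf_numx].
Qed.
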